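(* Let $\mathcal{V}$ be a variety of algebras of signature $\Omega$, $\mathcal{C}$ a full subcategory of the category of finitely generated free $\mathcal{V}$-algebras containing the free monogenic algebra $A_0$ on $x_0$, and $\Phi$ an automorphism of $\mathcal{C}$ with main function $(s_A)=(s^\Phi_A)$. Let $A,B$ be $\mathcal{C}$-algebras. Then every homomorphism $\mu:\Phi(A)\to\Phi(B)$ maps $s_A(|A|)$ into $s_B(|B|)$ and its restriction to $s_A(|A|)$ is a homomorphism $A^*\to B^*$. Conversely, every homomorphism $\nu:A^*\to B^*$ is the restriction of exactly one homomorphism $\mu:\Phi(A)\to\Phi(B)$.
   Context: Morphisms of $\mathcal{C}$ are all homomorphisms. For $a\in A$, $\alpha^A_a:A_0\to A$ is the homomorphism with $x_0\mapsto a$. Let $\eta^\Phi_0:\Phi^{-1}(A_0)\to A_0$ be the homomorphism sending every element of a fixed basis of $\Phi^{-1}(A_0)$ to $x_0$ (the identity if $\Phi(A_0)=A_0$), and $\eta^\Phi=\Phi(\eta^\Phi_0)$. The main function is $s_A:|A|\to|\Phi(A)|$, $s_A(a)=\Phi(\alpha^A_a)(\eta^\Phi(x_0))$; it is injective. For a $\mathcal{C}$-algebra $A$, $A^*$ is the $\Omega$-algebra with underlying set $s_A(|A|)\subseteq|\Phi(A)|$ and operations $\omega^*_A(s_A(a_1),\dots,s_A(a_k))=s_A(\omega_A(a_1,\dots,a_k))$ for each $k$-ary $\omega\in\Omega$ and $a_1,\dots,a_k\in|A|$ (so $s_A$ is an isomorphism $A\to A^*$). *)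

From Stdlib Require Import ClassicalEpsilon.
From mathcomp Require Import ssreflect ssrfun ssrbool eqtype ssrnat seq fintype.

Set Implicit Arguments.
Unset Strict Implicit.
Unset Printing Implicit Defensive.

Record signature := Signature { op_sym : Type; arity : op_sym -> nat }.

Record algebra (S : signature) := Algebra {
  carrier :> Type;
  ops : forall w : op_sym S, ('I_(arity w) -> carrier) -> carrier }.
Arguments ops {S} a w _ : rename.

Section Algebras.
Variable S : signature.

Definition is_hom (A B : algebra S) (f : A -> B) : Prop :=
  forall (w : op_sym S) (args : 'I_(arity w) -> A),
    f (ops A w args) = ops B w (fun i => f (args i)).

Definition hom (A B : algebra S) := {f : A -> B | is_hom f}.

Lemma is_hom_id (A : algebra S) : is_hom (fun x : A => x).
Proof. by []. Qed.

Lemma is_hom_comp (A B C : algebra S) (g : hom B C) (f : hom A B) :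
  is_hom (fun x => proj1_sig g (proj1_sig f x)).
Proof.
move=> w args; rewrite (proj2_sig f) (proj2_sig g) //.
Qed.

Definition idh (A : algebra S) : hom A A := exist _ _ (@is_hom_id A).
Definition comph (A B C : algebra S) (g : hom B C) (f : hom A B) : hom A C :=
  exist _ _ (is_hom_comp g f).

Inductive term : Type :=
| Var : nat -> term
| App : forall w : op_sym S, ('I_(arity w) -> term) -> term.

Fixpoint eval (A : algebra S) (v : nat -> A) (t : term) : A :=
  match t with
  | Var n => v n
  | App w args => ops A w (fun i => eval v (args i))
  end.

(* The variety V defined by a set of identities E (Birkhoff). *)
Definition in_variety (E : term -> term -> Prop) (A : algebra S) : Prop :=
  forall t u, E t u -> forall v : nat -> A, eval v t = eval v u.

Definition is_free_on (E : term -> term -> Prop) (A : algebra S) (X : A -> Prop) : Prop :=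
  in_variety E A /\
  forall B : algebra S, in_variety E B ->
    forall g : A -> B,
      (exists h : hom A B, forall x, X x -> proj1_sig h x = g x) /\
      (forall h1 h2 : hom A B, (forall x, X x -> proj1_sig h1 x = proj1_sig h2 x) ->
          forall a, proj1_sig h1 a = proj1_sig h2 a).

Definition fg_free (E : term -> term -> Prop) (A : algebra S) : Prop :=
  exists X : A -> Prop, (exists l : list A, forall x, X x -> List.In x l) /\
                        @is_free_on E A X.

Definition obj (Cobj : algebra S -> Prop) := {A : algebra S | Cobj A}.

(* An automorphism (isomorphism of categories C -> C) of the full subcategory C,
   whose morphisms are all homomorphisms: a functor which is bijective on
   objects and bijective on each hom-set. *)
Record cat_auto (Cobj : algebra S -> Prop) := CatAuto {
  Fo : obj Cobj -> obj Cobj;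
  Fh : forall A B : obj Cobj, hom (proj1_sig A) (proj1_sig B) ->
         hom (proj1_sig (Fo A)) (proj1_sig (Fo B));
  F_id : forall A : obj Cobj, Fh (idh (proj1_sig A)) = idh (proj1_sig (Fo A));
  F_comp : forall (A B C : obj Cobj) (g : hom (proj1_sig B) (proj1_sig C))
             (f : hom (proj1_sig A) (proj1_sig B)),
             Fh (comph g f) = comph (Fh g) (Fh f);
  Fo_bij : bijective Fo;
  Fh_bij : forall A B : obj Cobj, bijective (@Fh A B) }.

(* The algebra A^* : carrier s(|A|) inside T, operations transported along s
   (preimages are chosen; when s is injective this is exactly the paper's definition). *)
Definition star_pre (A T : algebra S) (s : A -> T) (y : {y : T | exists a, s a = y}) : A :=
  proj1_sig (constructive_indefinite_description _ (proj2_sig y)).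

Definition star_alg (A T : algebra S) (s : A -> T) : algebra S :=
  @Algebra S {y : T | exists a, s a = y}
    (fun w args => exist _ (s (ops A w (fun i => star_pre (args i))))
                         (ex_intro _ _ erefl)).

End Algebras.

Arguments Fo {S Cobj} c _.
Arguments Fh {S Cobj} c {A B} _.

(* The main function s_A(a) = Phi(alpha_a)(e), where e = eta^Phi(x0). *)
Definition main_fun (S : signature) (Cobj : algebra S -> Prop) (Phi : cat_auto Cobj)
  (A0 : obj Cobj) (alpha : forall A : obj Cobj, proj1_sig A -> hom (proj1_sig A0) (proj1_sig A))
  (e : proj1_sig (Fo Phi A0)) (A : obj Cobj) (a : proj1_sig A) : proj1_sig (Fo Phi A) :=
  proj1_sig (Fh Phi (alpha A a)) e.

From Stdlib Require Import ClassicalEpsilon Classical.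
From Stdlib Require Import FunctionalExtensionality ProofIrrelevance.
From mathcomp Require Import ssreflect ssrfun ssrbool eqtype ssrnat seq fintype.

(* The main function is natural: [m \o alpha_a] and [alpha_(m a)] agree on the free
   generator x0, so functoriality gives [Phi(m) (s_A a) = s_B (m a)].  It is injective:
   [s_X a = s_X b] says that [Phi(alpha_a \o eta0)] and [Phi(alpha_b \o eta0)] agree on
   the free generator of [Phi(P) = A0], so [alpha_a \o eta0 = alpha_b \o eta0] by
   faithfulness; evaluating at a basis element of P gives [a = b], and if P has an
   empty basis it is initial, hence so is [Phi(P) = A0], and [alpha_a = alpha_b].
   As Phi is full, every [mu : Phi(A) -> Phi(B)] is some [Phi(m)] and restricts to
   [s_B \o m \o s_A^-1] on A^*; conversely [nu : A^* -> B^*] yields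
   [n = s_B^-1 \o nu \o s_A : A -> B], and [Phi(n)] extends nu, uniquely since Phi is
   faithful and s_B injective. *)

Set Implicit Arguments.
Unset Strict Implicit.
Unset Printing Implicit Defensive.

Section Homomorphisms.
Variable S : signature.

Lemma hom_ext (A B : algebra S) (f g : hom A B) : proj1_sig f =1 proj1_sig g -> f = g.
Proof.
case: f g => [f fh] [g gh] /= /functional_extensionality fg.
by subst g; rewrite (proof_irrelevance _ fh gh).
Qed.

Lemma free_hom_ext (E : term S -> term S -> Prop) (A B : algebra S) (X : A -> Prop) :
  is_free_on E X -> in_variety E B ->
  forall h1 h2 : hom A B, (forall x, X x -> proj1_sig h1 x = proj1_sig h2 x) -> h1 = h2.
Proof.
move=> [_ freeA] inB h1 h2 eqX; apply: hom_ext => a.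
by case: (freeA B inB (proj1_sig h1)) => _; apply.
Qed.

Lemma free_on_empty_hom_unique (E : term S -> term S -> Prop) (A B : algebra S)
    (X : A -> Prop) :
  is_free_on E X -> ~ (exists x, X x) -> in_variety E B ->
  forall h1 h2 : hom A B, h1 = h2.
Proof.
move=> freeA noX inB h1 h2; apply: (free_hom_ext freeA inB) => x Xx.
by case: noX; exists x.
Qed.

End Homomorphisms.

Section StarAlgebra.
Variables (S : signature) (A T : algebra S) (s : A -> T).

Definition star_in (a : A) : star_alg s := exist _ (s a) (ex_intro _ a erefl).

Lemma star_preK (y : star_alg s) : s (star_pre y) = proj1_sig y.
Proof. by rewrite /star_pre; case: constructive_indefinite_description. Qed.

Hypothesis s_inj : injective s.

Lemma star_inK : cancel star_in (@star_pre S A T s).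
Proof. by move=> a; apply: s_inj; rewrite star_preK. Qed.

Lemma star_pre_is_hom : @is_hom S (star_alg s) A (@star_pre S A T s).
Proof. by move=> w args; apply: s_inj; rewrite star_preK. Qed.

Lemma star_in_is_hom : @is_hom S A (star_alg s) star_in.
Proof.
move=> w args; apply: subset_eq_compat; congr (s (ops A w _)).
by apply: functional_extensionality => i; rewrite star_inK.
Qed.

Definition star_pre_hom : hom (star_alg s) A := exist _ _ star_pre_is_hom.
Definition star_in_hom : hom A (star_alg s) := exist _ _ star_in_is_hom.

End StarAlgebra.

Section CategoryAutomorphism.
Variables (S : signature) (E : term S -> term S -> Prop) (Cobj : algebra S -> Prop).
Hypothesis HC : forall A : algebra S, Cobj A -> fg_free E A.
Variable Phi : cat_auto Cobj.

Lemma obj_in_variety (X : obj Cobj) : in_variety E (proj1_sig X).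
Proof. by case: (HC (proj2_sig X)) => Y [_ []]. Qed.

Lemma Fh_comp_apply (U V W : obj Cobj) (g : hom (proj1_sig V) (proj1_sig W))
    (f : hom (proj1_sig U) (proj1_sig V)) x :
  proj1_sig (Fh Phi (comph g f)) x = proj1_sig (Fh Phi g) (proj1_sig (Fh Phi f) x).
Proof. by rewrite F_comp. Qed.

Lemma Fh_inj (U V : obj Cobj) : injective (@Fh _ _ Phi U V).
Proof. exact: bij_inj (Fh_bij Phi U V). Qed.

Lemma Fh_onto (U V : obj Cobj) (g : hom (proj1_sig (Fo Phi U)) (proj1_sig (Fo Phi V))) :
  exists f, Fh Phi f = g.
Proof. by case: (Fh_bij Phi U V) => k _ kK; exists (k g). Qed.

Lemma Fh_hom_unique (U V : obj Cobj) :
    (forall f1 f2 : hom (proj1_sig U) (proj1_sig V), f1 = f2) ->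
  forall g1 g2 : hom (proj1_sig (Fo Phi U)) (proj1_sig (Fo Phi V)), g1 = g2.
Proof.
move=> uniqUV g1 g2.
by case: (Fh_onto g1) => f1 <-; case: (Fh_onto g2) => f2 <-; rewrite (uniqUV f1 f2).
Qed.

Variables (A0 : algebra S) (x0 : A0) (HA0C : Cobj A0).
Hypothesis HA0 : is_free_on E (fun x : A0 => x = x0).
Variable alpha : forall A : obj Cobj, proj1_sig A -> hom A0 (proj1_sig A).
Hypothesis Halpha : forall (A : obj Cobj) (a : proj1_sig A), proj1_sig (alpha a) x0 = a.

Local Notation A0C := (exist Cobj A0 HA0C).

Lemma hom_A0_ext (X : algebra S) : in_variety E X ->
  forall h1 h2 : hom A0 X, proj1_sig h1 x0 = proj1_sig h2 x0 -> h1 = h2.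
Proof. by move=> inX h1 h2 eq_x0; apply: (free_hom_ext HA0 inX) => x ->. Qed.

Lemma alpha_natural (U V : obj Cobj) (m : hom (proj1_sig U) (proj1_sig V)) a :
  comph m (alpha a) = alpha (proj1_sig m a).
Proof. by apply: hom_A0_ext; [exact: obj_in_variety | rewrite /= !Halpha]. Qed.

Section MainFunction.
Variable e : proj1_sig (Fo Phi A0C).
Local Notation s X := (@main_fun S Cobj Phi A0C alpha e X).

Lemma main_fun_natural (U V : obj Cobj) (m : hom (proj1_sig U) (proj1_sig V)) a :
  proj1_sig (Fh Phi m) (s U a) = s V (proj1_sig m a).
Proof. by rewrite /main_fun -Fh_comp_apply alpha_natural. Qed.

Hypothesis s_inj : forall X : obj Cobj, injective (s X).

Lemma main_fun_restrict (A B : obj Cobj)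
    (mu : hom (proj1_sig (Fo Phi A)) (proj1_sig (Fo Phi B))) :
  (forall a : proj1_sig A, exists b : proj1_sig B, proj1_sig mu (s A a) = s B b) /\
  exists h : hom (star_alg (s A)) (star_alg (s B)),
    forall y, proj1_sig (proj1_sig h y) = proj1_sig mu (proj1_sig y).
Proof.
case: (Fh_onto mu) => m <-; split=> [a|].
  by exists (proj1_sig m a); rewrite main_fun_natural.
exists (comph (star_in_hom (@s_inj B)) (comph m (star_pre_hom (@s_inj A)))) => y /=.
by rewrite -main_fun_natural star_preK.
Qed.

Lemma main_fun_extend (A B : obj Cobj)
    (nu : hom (star_alg (s A)) (star_alg (s B))) :
  exists mu : hom (proj1_sig (Fo Phi A)) (proj1_sig (Fo Phi B)),
    (forall y, proj1_sig mu (proj1_sig y) = proj1_sig (proj1_sig nu y)) /\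
    (forall mu' : hom (proj1_sig (Fo Phi A)) (proj1_sig (Fo Phi B)),
       (forall y, proj1_sig mu' (proj1_sig y) = proj1_sig (proj1_sig nu y)) ->
       forall x, proj1_sig mu' x = proj1_sig mu x).
Proof.
pose n := comph (star_pre_hom (@s_inj B)) (comph nu (star_in_hom (@s_inj A))).
have restr_n a :
    proj1_sig (Fh Phi n) (s A a) = proj1_sig (proj1_sig nu (star_in (s A) a)).
  by rewrite main_fun_natural /= star_preK.
exists (Fh Phi n); split=> [[y [a def_y]] | mu' restr_mu' x].
  by subst y; exact: restr_n.
case: (Fh_onto mu') => m' def_mu'; suff m'n : m' = n by rewrite -def_mu' m'n.
apply: hom_ext => a; apply: (@s_inj B).
by rewrite -!main_fun_natural restr_n def_mu'; apply: restr_mu' (star_in (s A) a).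
Qed.

End MainFunction.

Lemma hom_ext_at_x0 (Q : obj Cobj) (HQ : Q = A0C) (X : algebra S) : in_variety E X ->
  forall h1 h2 : hom (proj1_sig Q) X,
    proj1_sig h1 (eq_rect A0C (fun o => proj1_sig o : Type) x0 Q (esym HQ)) =
    proj1_sig h2 (eq_rect A0C (fun o => proj1_sig o : Type) x0 Q (esym HQ)) -> h1 = h2.
Proof. by subst Q; exact: hom_A0_ext. Qed.

Section Injectivity.
Variables (P : obj Cobj) (HP : Fo Phi P = A0C).
Variable Y : proj1_sig P -> Prop.
Hypothesis HY : is_free_on E Y.
Variable eta0 : hom (proj1_sig P) A0.
Hypothesis Heta0 : forall y, Y y -> proj1_sig eta0 y = x0.

Lemma alpha_eta0_inj (X : obj Cobj) (a b : proj1_sig X) :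
  comph (alpha a) eta0 = comph (alpha b) eta0 -> a = b.
Proof.
move=> eq_eta; have [[y Yy] | noY] := classic (exists y, Y y).
  by move: (congr1 (fun h => proj1_sig h y) eq_eta) => /=; rewrite Heta0 // !Halpha.
case: (Fo_bij Phi) => g _ gK.
have := Fh_hom_unique (free_on_empty_hom_unique HY noY (@obj_in_variety (g X))).
rewrite HP gK => uniq_A0X.
by rewrite -(Halpha a) -(Halpha b) (uniq_A0X (alpha a) (alpha b)).
Qed.

Lemma main_fun_inj (X : obj Cobj) :
  injective (@main_fun S Cobj Phi A0C alpha
    (proj1_sig (Fh Phi (B := A0C) eta0)
       (eq_rect A0C (fun o => proj1_sig o : Type) x0 _ (esym HP))) X).
Proof.
move=> a b; rewrite /main_fun -!Fh_comp_apply.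
by move/(hom_ext_at_x0 (HQ := HP) (@obj_in_variety _))/Fh_inj/alpha_eta0_inj.
Qed.

End Injectivity.
End CategoryAutomorphism.

Theorem theorem3
  (S : signature) (E : term S -> term S -> Prop)
  (Cobj : algebra S -> Prop)
  (HC : forall A : algebra S, Cobj A -> fg_free E A)
  (A0 : algebra S) (x0 : A0) (HA0C : Cobj A0)
  (HA0 : @is_free_on S E A0 (fun x => x = x0))
  (Phi : cat_auto Cobj)
  (alpha : forall A : obj Cobj, proj1_sig A -> hom A0 (proj1_sig A))
  (Halpha : forall (A : obj Cobj) (a : proj1_sig A), proj1_sig (alpha A a) x0 = a)
  (P : obj Cobj) (HP : Fo Phi P = exist Cobj A0 HA0C)
  (Y : proj1_sig P -> Prop) (HY : @is_free_on S E (proj1_sig P) Y)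
  (eta0 : hom (proj1_sig P) A0)
  (Heta0 : forall y, Y y -> proj1_sig eta0 y = x0)
  (Heta0id : forall H : P = exist Cobj A0 HA0C, forall x : proj1_sig P,
      proj1_sig eta0 x = eq_rect P (fun o => proj1_sig o : Type) x _ H)
  (A B : obj Cobj) :
  let e : proj1_sig (Fo Phi (exist Cobj A0 HA0C)) :=
    proj1_sig (Fh Phi (B := exist Cobj A0 HA0C) eta0)
      (eq_rect (exist Cobj A0 HA0C) (fun o => proj1_sig o : Type) x0 _ (esym HP)) in
  let s := @main_fun S Cobj Phi (exist Cobj A0 HA0C) alpha e in
  let Astar := star_alg (s A) in
  let Bstar := star_alg (s B) in
  (forall mu : hom (proj1_sig (Fo Phi A)) (proj1_sig (Fo Phi B)),
      (forall a : proj1_sig A, exists b : proj1_sig B, proj1_sig mu (s A a) = s B b) /\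
      exists h : hom Astar Bstar,
        forall y : Astar, proj1_sig (proj1_sig h y) = proj1_sig mu (proj1_sig y)) /\
  (forall nu : hom Astar Bstar,
      exists mu : hom (proj1_sig (Fo Phi A)) (proj1_sig (Fo Phi B)),
        (forall y : Astar, proj1_sig mu (proj1_sig y) = proj1_sig (proj1_sig nu y)) /\
        (forall mu' : hom (proj1_sig (Fo Phi A)) (proj1_sig (Fo Phi B)),
           (forall y : Astar, proj1_sig mu' (proj1_sig y) = proj1_sig (proj1_sig nu y)) ->
           forall x, proj1_sig mu' x = proj1_sig mu x)).
Proof.
move=> e s Astar Bstar.
have s_inj X : injective (s X) by move=> a b; apply: (main_fun_inj HC HA0 Halpha HY Heta0).
split=> [mu | nu]; first exact: (main_fun_restrict HC HA0 Halpha s_inj mu).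
exact: (main_fun_extend HC HA0 Halpha s_inj nu).
Qed.
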